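(* Let $V=\{n\in\mathbb{Z} : n\geq 2,\ 5\nmid n\}$ and let $\Gamma_5$ be the directed graph on $V$ with up-edges $(n,(n+5)^2)$ and down-edges $(n^2,n)$ for $n\in V$. Let $B$ be a square-to-square conveyor belt path in $\Gamma_5$ consisting of fewer than $150$ steps, i.e. of the form $(UD)^i$ with $1\leq i<75$. (a) If the vertices $v_0,v_1,\dots,v_i$ of $B$ are congruent to $1$ modulo $5$, then its endpoint $v_i$ is at most $91^2$. (b) If these vertices are congruent to $4$ modulo $5$, then its endpoint $v_i$ is at most $183^2$.
   Context: A conveyor belt is a path in $\Gamma_5$ whose edge labels are $UD\,UD\cdots UD$ ($U$ = up-edge, $D$ = down-edge), i.e. $(UD)^i$ for some $i\geq 1$; it has $2i$ steps. Each $UD$ step takes a vertex $v$ to $(v+5)^2$ and then to $v+5$, so the belt visits $v_0, (v_0+5)^2, v_0+5, \dots$; write $v_j=v_0+5j$ for the vertices reached after each $UD$ step, so it begins at $v_0$ and ends at $v_i=v_0+5i$, and all $v_j$ are congruent modulo $5$. A conveyor belt is square-to-square if both its starting vertex $v_0$ and its ending vertex $v_i$ are perfect squares. *)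

From mathcomp Require Import all_boot all_order all_algebra.
Set Implicit Arguments. Unset Strict Implicit. Unset Printing Implicit Defensive.
Import Order.TTheory GRing.Theory Num.Theory.
Local Open Scope ring_scope.

Definition inV (n : int) : bool := (2 <= n) && ~~ (5 %| n)%Z.

Inductive lbl := LU | LD.

Definition edge (l : lbl) (x y : int) : bool :=
  [&& inV x, inV y &
    match l with
    | LU => y == (x + 5) ^+ 2
    | LD => x == y ^+ 2
    end].

Fixpoint walk (ls : seq lbl) (x : int) (p : seq int) : bool :=
  match ls, p with
  | [::], [::] => true
  | l :: ls', y :: p' => edge l x y && walk ls' y p'
  | _, _ => false
  end.

Definition conveyor_labels (i : nat) : seq lbl := flatten (nseq i [:: LU; LD]).

Definition is_square (x : int) : Prop := exists m : int, x = m ^+ 2.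

From mathcomp Require Import all_boot all_order all_algebra zify.
Set Implicit Arguments. Unset Strict Implicit. Unset Printing Implicit Defensive.
Import Order.TTheory GRing.Theory Num.Theory.
Local Open Scope ring_scope.

(* A belt of i steps UD goes from a^2 to b^2 = a^2 + 5i, so (b - a)(b + a) = 5i < 375.
   A gap b - a >= 3 forces b <= 63.  A gap of 1 gives 2a + 1 = 5i, hence a = 2 (mod 5),
   a^2 = 4 (mod 5) and b <= 183; a gap of 2 gives 4(a + 1) = 5i, hence a = 4 (mod 5),
   a^2 = 1 (mod 5) and b <= 91.  So the residue of the starting vertex alone rules out
   one of the two small gaps. *)

Lemma walk_conveyor_last (i : nat) (x : int) (p : seq int) :
  walk (conveyor_labels i) x p -> last x p = x + 5 * i%:Z.
Proof.
elim: i x p => [|i IH] x [|y [|z p]] //=; first by rewrite mulr0 addr0.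
  by rewrite andbF.
rewrite /edge /inV => /and3P [/and3P [/andP [x_ge2 _] _ /eqP ->]].
move=> /and3P [_ /andP [z_ge2 _] /eqP ez] /IH ->.
have -> : z = x + 5 by move: ez; nia.
lia.
Qed.

Lemma is_square_nonneg (x : int) : is_square x -> exists2 a, 0 <= a & x = a ^+ 2.
Proof. by case=> a ->; exists `|a|; rewrite ?real_normK ?num_real. Qed.

Lemma sqr_gap1_mod5 (a n : int) : (a + 1) ^+ 2 = a ^+ 2 + 5 * n -> (a ^+ 2 %% 5)%Z = 4.
Proof.
move=> e; have [k ->] : exists k, a = 5 * k + 2 by exists ((a - 2) %/ 5)%Z; nia.
lia.
Qed.

Lemma sqr_gap2_mod5 (a n : int) : (a + 2) ^+ 2 = a ^+ 2 + 5 * n -> (a ^+ 2 %% 5)%Z = 1.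
Proof.
move=> e; have [k ->] : exists k, a = 5 * k + 4 by exists ((a - 4) %/ 5)%Z; nia.
lia.
Qed.

Section SquareGaps.

Variables (n : nat) (a b : int).
Hypothesis n_lt75 : (n < 75)%N.

Lemma sqr_gap1_bound : (a + 1) ^+ 2 = a ^+ 2 + 5 * n%:Z -> a + 1 <= 183.
Proof. nia. Qed.

Lemma sqr_gap2_bound : (a + 2) ^+ 2 = a ^+ 2 + 5 * n%:Z -> a + 2 <= 91.
Proof. nia. Qed.

Lemma sqr_gap_ge3_bound : 0 <= a -> a + 3 <= b -> b ^+ 2 = a ^+ 2 + 5 * n%:Z -> b <= 63.
Proof. nia. Qed.

Lemma sqr_add_5mul_bound : (0 < n)%N -> 0 <= a -> 0 <= b ->
  b ^+ 2 = a ^+ 2 + 5 * n%:Z ->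
  ((a ^+ 2 %% 5)%Z = 1 -> b <= 91) /\ ((a ^+ 2 %% 5)%Z = 4 -> b <= 183).
Proof.
move=> n_gt0 a_ge0 b_ge0 e; have lt_ab : a < b by nia.
have [lt_b_a3|le_a3_b] := ltrP b (a + 3).
  have [eb|eb] : b = a + 1 \/ b = a + 2 by lia.
  - rewrite eb in e *; have := sqr_gap1_mod5 e; have := sqr_gap1_bound e.
    by split=> ?; lia.
  - rewrite eb in e *; have := sqr_gap2_mod5 e; have := sqr_gap2_bound e.
    by split=> ?; lia.
by have := sqr_gap_ge3_bound a_ge0 le_a3_b e; split=> _; lia.
Qed.

End SquareGaps.

Theorem lemma11 (i : nat) (x : int) (p : seq int) :
  (1 <= i < 75)%N ->
  walk (conveyor_labels i) x p ->
  is_square x -> is_square (last x p) ->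
  ((forall j : nat, (j <= i)%N -> ((nth 0 (x :: p) (2 * j)) %% 5)%Z = 1) ->
     last x p <= 91 ^+ 2) /\
  ((forall j : nat, (j <= i)%N -> ((nth 0 (x :: p) (2 * j)) %% 5)%Z = 4) ->
     last x p <= 183 ^+ 2).
Proof.
case/andP=> i_gt0 i_lt75 /walk_conveyor_last e_last.
case/is_square_nonneg=> a a_ge0 ex; case/is_square_nonneg=> b b_ge0 eb.
have e : b ^+ 2 = a ^+ 2 + 5 * i%:Z by rewrite -eb e_last ex.
have [le_b91 le_b183] := sqr_add_5mul_bound i_lt75 i_gt0 a_ge0 b_ge0 e.
rewrite eb; split=> /(_ 0%N isT) /=; rewrite ex => res.
- by have := le_b91 res; nia.
- by have := le_b183 res; nia.
Qed.
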